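(* In the setting described in the context, for every $j\ne i^*$ and every collection of nonnegative numbers $(G_i(\theta_b))_{i\ne i^b}$, $$\min_{\mathbf M\in\mathcal A_j}\sum_{(i,\theta_b)\in I(\mathbf M)}G_i(\theta_b)=\min_{\mathbf M\in\widetilde{\mathcal A}_j}\sum_{(i,\theta_b)\in I(\mathbf M)}G_i(\theta_b).$$
   Context: There are $k\ge2$ solutions and parameter values $\theta_1,\dots,\theta_B$ with probabilities $p_b\ge0$, $\sum_bp_b=1$. For each $b$ a unique conditional optimum $i^b\in\{1,\dots,k\}$ is given, and $i^*=\arg\max_i\sum_bp_b\mathbf 1\{i=i^b\}$ is assumed unique. Let $\mathcal M=\{\mathbf M\in\{0,1\}^{k\times B}:\mathbf M^\top\mathbf 1_k=\mathbf 1_B\}$ with entries $m_{i,b}$; $d_j(\mathbf M)=\sum_bp_bm_{i^*,b}-\sum_bp_bm_{j,b}$; $d_j=\sum_bp_b\mathbf 1\{i^*=i^b\}-\sum_bp_b\mathbf 1\{j=i^b\}$; $I(\mathbf M)=\{(i,\theta_b):m_{i,b}=1,i\ne i^b\}$; $\mathcal A_j=\{\mathbf M\in\mathcal M:d_j(\mathbf M)\le0\}$. Let $\Xi=\{(i,\theta_b):i\ne i^*,i\ne i^b\}$ and $\Xi^{\mathrm{adv}}=\{(i^*,\theta_b):i^b\ne i^*\}$. For $(i,\theta_b)\in\Xi\cup\Xi^{\mathrm{adv}}$ let $v_j[(i,\theta_b)]=p_b(\mathbf 1\{j=i\}-\mathbf 1\{j=i^b\}-\mathbf 1\{i^*=i\}+\mathbf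 1\{i^*=i^b\})$ and $v_j[(i,\theta_b)]^+=\max\{v_j[(i,\theta_b)],0\}$. Define $\widetilde{\mathcal A}_j=\{\mathbf M\in\mathcal M:d_j-\sum_{(i,\theta_b)\in\Xi\cup\Xi^{\mathrm{adv}}}v_j[(i,\theta_b)]^+m_{i,b}\le0\}$. *)

From HB Require Import structures.
From mathcomp Require Import all_boot all_order all_algebra.
Set Implicit Arguments. Unset Strict Implicit. Unset Printing Implicit Defensive.
Import Order.TTheory GRing.Theory Num.Theory.
Local Open Scope ring_scope.

(* Solutions are indexed by 'I_k, parameter values theta_1..theta_B by 'I_B.
   A matrix M in {0,1}^{k x B} is a boolean matrix 'M[bool]_(k,B); entry
   m_{i,b} is (M i b)%:R. *)

Section Defs.
Variables (R : realFieldType) (k B : nat).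
Variables (p : 'I_B -> R) (ib : 'I_B -> 'I_k) (istar : 'I_k).

Definition inM (M : 'M[bool]_(k, B)) : Prop :=
  forall b : 'I_B, (\sum_(i < k) nat_of_bool (M i b))%N = 1%N.

Definition dM (j : 'I_k) (M : 'M[bool]_(k, B)) : R :=
  \sum_(b < B) p b * (M istar b)%:R - \sum_(b < B) p b * (M j b)%:R.

Definition d (j : 'I_k) : R :=
  \sum_(b < B) p b * (istar == ib b)%:R - \sum_(b < B) p b * (j == ib b)%:R.

Definition inI (M : 'M[bool]_(k, B)) (i : 'I_k) (b : 'I_B) : bool :=
  M i b && (i != ib b).

Definition costI (G : 'I_k -> 'I_B -> R) (M : 'M[bool]_(k, B)) : R :=
  \sum_(i < k) \sum_(b < B | inI M i b) G i b.

Definition inA (j : 'I_k) (M : 'M[bool]_(k, B)) : Prop :=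
  inM M /\ dM j M <= 0.

Definition inXi (i : 'I_k) (b : 'I_B) : bool := (i != istar) && (i != ib b).
Definition inXiadv (i : 'I_k) (b : 'I_B) : bool := (i == istar) && (ib b != istar).

Definition v (j i : 'I_k) (b : 'I_B) : R :=
  p b * ((j == i)%:R - (j == ib b)%:R - (istar == i)%:R + (istar == ib b)%:R).
Definition vplus (j i : 'I_k) (b : 'I_B) : R := Num.max (v j i b) 0.

Definition inAt (j : 'I_k) (M : 'M[bool]_(k, B)) : Prop :=
  inM M /\
  d j - \sum_(i < k) \sum_(b < B | inXi i b || inXiadv i b)
            vplus j i b * (M i b)%:R <= 0.

Definition is_min_over (P : 'M[bool]_(k, B) -> Prop)
  (f : 'M[bool]_(k, B) -> R) (c : R) : Prop :=
  (exists2 M, P M & f M = c) /\ (forall M, P M -> c <= f M).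

End Defs.

From HB Require Import structures.
From mathcomp Require Import all_boot all_order all_algebra.
From mathcomp Require Import ring lra.
Set Implicit Arguments. Unset Strict Implicit. Unset Printing Implicit Defensive.
Import Order.TTheory GRing.Theory Num.Theory.
Local Open Scope ring_scope.

(* For a one-hot column with its 1 in row r, the column's contribution to
   d_j - d_j(M) is v_j[(r, theta_b)], and v_j vanishes on the diagonal
   r = i^b.  So the constraint of A~_j is that of A_j with every v replaced by
   its positive part.  Hence A_j is contained in A~_j, and conversely any M in
   A~_j can be repaired into A_j by moving every column with negative v to its
   conditional optimum i^b: this turns v into 0 = v^+ and only removes pairs
   from I(M), so with G >= 0 it does not increase the cost.  Both minima are
   thus the (attained) minimum over the finite set A_j. *)

Section Minimum.
Variables (R : realFieldType) (k B : nat).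
Implicit Types (P Q : 'M[bool]_(k, B) -> Prop) (f : 'M[bool]_(k, B) -> R).

Lemma is_min_over_exists P (Pb : pred 'M[bool]_(k, B)) f :
  (forall M, reflect (P M) (Pb M)) -> (exists M, P M) ->
  exists c, is_min_over P f c.
Proof.
move=> PP [M0 /PP PM0]; have [M /PP PM Mmin] := arg_minP f PM0.
by exists (f M); split=> [|N /PP]; [exists M | apply: Mmin].
Qed.

Lemma is_min_over_dominated P Q f c :
  (forall M, P M -> Q M) ->
  (forall M, Q M -> exists2 M', P M' & f M' <= f M) ->
  is_min_over P f c -> is_min_over Q f c.
Proof.
move=> PQ domQ [[M PM <-] Mmin]; split=> [|N /domQ [N' /Mmin]].
  by exists M; first exact: PQ.
exact: le_trans.
Qed.

End Minimum.

Section OneHotColumns.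
Variables (k B : nat).
Implicit Type M : 'M[bool]_(k, B).

Lemma inMP M : reflect (inM M) [forall b, (\sum_(i < k) M i b == 1)%N].
Proof. by apply: (iffP forallP) => H b; apply/eqP. Qed.

Lemma inM_col_onehot M :
  inM M -> forall b, exists r, forall i, M i b = (i == r).
Proof.
move=> HM b; have := HM b.
case: (pickP (M^~ b)) => [r Mrb | M0]; last first.
  by rewrite big1 // => i _; rewrite M0.
rewrite (bigD1 r) //= Mrb => /eqP; rewrite -[X in (_ == X)%N]addn0 eqn_add2l.
rewrite sum_nat_eq0 => /forallP Mb0; exists r => i.
by case: eqVneq => [-> //| ne]; have := Mb0 i; rewrite ne /=; case: (M i b).
Qed.

Lemma sum_mul_onehot (R : realFieldType) (f : 'I_k -> R) (m : 'I_k -> bool) r :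
  (forall i, m i = (i == r)) -> \sum_i f i * (m i)%:R = f r.
Proof.
move=> mE; rewrite (bigD1 r) //= mE eqxx mulr1 big1 ?addr0 // => i /negbTE ne.
by rewrite mE ne mulr0.
Qed.

End OneHotColumns.

Section Relaxation.
Variables (R : realFieldType) (k B : nat) (p : 'I_B -> R).
Variables (ib : 'I_B -> 'I_k) (istar j : 'I_k).
Implicit Type M : 'M[bool]_(k, B).

Definition vcol M b : R := \sum_i v p ib istar j i b * (M i b)%:R.

Definition repair M : 'M[bool]_(k, B) :=
  \matrix_(i, b) if vcol M b < 0 then i == ib b else M i b.

Lemma v_diag b : v p ib istar j (ib b) b = 0.
Proof. by rewrite /v; ring. Qed.

Lemma dM_vcol M : inM M -> dM p istar j M = d p ib istar j - \sum_b vcol M b.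
Proof.
move=> HM; rewrite /dM /d -!sumrB; apply: eq_bigr => b _.
have [r Mb] := inM_col_onehot HM b.
by rewrite /vcol (sum_mul_onehot _ Mb) !Mb /v; ring.
Qed.

Lemma inXi_or_inXiadv i b :
  inXi ib istar i b || inXiadv ib istar i b = (i != ib b).
Proof.
by rewrite /inXi /inXiadv; case: eqVneq => [->|] /=; rewrite ?orbF 1?eq_sym.
Qed.

Lemma inAt_penalty M : inM M ->
  \sum_(i < k) \sum_(b < B | inXi ib istar i b || inXiadv ib istar i b)
     vplus p ib istar j i b * (M i b)%:R = \sum_b Num.max (vcol M b) 0.
Proof.
move=> HM; rewrite (exchange_big_dep predT) //=; apply: eq_bigr => b _.
have [r Mb] := inM_col_onehot HM b.
rewrite /vcol (sum_mul_onehot _ Mb) -[Num.max _ 0]/(vplus p ib istar j r b).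
rewrite -(sum_mul_onehot (vplus p ib istar j ^~ b) Mb).
rewrite [RHS](bigID (fun i => inXi ib istar i b || inXiadv ib istar i b)) /=.
rewrite [X in _ = _ + X]big1 ?addr0 // => i.
rewrite inXi_or_inXiadv negbK => /eqP ->.
by rewrite /vplus v_diag maxxx mul0r.
Qed.

Lemma inA_inAt M : inA p istar j M -> inAt p ib istar j M.
Proof.
case=> HM dM_le0; split=> //; apply: le_trans dM_le0.
rewrite inAt_penalty // dM_vcol // lerD2l lerN2.
by apply: ler_sum => b _; rewrite le_max lexx.
Qed.

Lemma repair_inM M : inM M -> inM (repair M).
Proof.
move=> HM b; under eq_bigr do rewrite mxE.
case: (vcol M b < 0); last exact: HM.
by rewrite (bigD1 (ib b)) //= eqxx big1 // => i /negbTE ->.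
Qed.

Lemma vcol_repair M b : vcol (repair M) b = Num.max (vcol M b) 0.
Proof.
have [vneg | vpos] := ltP (vcol M b) 0.
  rewrite /vcol (sum_mul_onehot _ (r := ib b)) ?v_diag //.
  by move=> i; rewrite mxE vneg.
apply: eq_bigr => i _.
by rewrite mxE ltNge vpos.
Qed.

Lemma inAt_repair M : inAt p ib istar j M -> inA p istar j (repair M).
Proof.
case=> HM penalty_le0; split; first exact: repair_inM.
rewrite dM_vcol; last exact: repair_inM.
rewrite (eq_bigr _ (fun b _ => vcol_repair M b)).
by rewrite -inAt_penalty.
Qed.

Lemma costI_repair (G : 'I_k -> 'I_B -> R) :
  (forall i b, i != ib b -> 0 <= G i b) ->
  forall M, costI ib G (repair M) <= costI ib G M.
Proof.
move=> G_ge0 M; apply: ler_sum => i _; rewrite big_mkcond [leRHS]big_mkcond.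
apply: ler_sum => b _; rewrite /inI mxE.
case: (vcol M b < 0) => /=; last exact: lexx.
by rewrite andbN; case: ifP => // /andP[_ /G_ge0].
Qed.

Lemma inA_const_row : \sum_b p b = 1 -> j != istar ->
  inA p istar j (\matrix_(i, b) (i == j)).
Proof.
move=> p1 j_neq; split=> [b | ].
  by rewrite (bigD1 j) //= mxE eqxx big1 // => i /negbTE ne; rewrite mxE ne.
rewrite /dM big1 => [|b _]; last by rewrite mxE eq_sym (negbTE j_neq) mulr0.
rewrite (eq_bigr p) ?p1 => [|b _]; last by rewrite mxE eqxx mulr1.
lra.
Qed.

End Relaxation.

Theorem mainTheorem8 (R : realFieldType) (k B : nat) (hk : (2 <= k)%N)
  (p : 'I_B -> R) (hp0 : forall b, 0 <= p b) (hp1 : \sum_(b < B) p b = 1)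
  (ib : 'I_B -> 'I_k) (istar : 'I_k)
  (hstar : forall i : 'I_k, i != istar ->
     \sum_(b < B) p b * (i == ib b)%:R < \sum_(b < B) p b * (istar == ib b)%:R)
  (j : 'I_k) (hj : j != istar)
  (G : 'I_k -> 'I_B -> R) (hG : forall i b, i != ib b -> 0 <= G i b) :
  exists c : R,
    is_min_over (inA p istar j) (costI ib G) c /\
    is_min_over (inAt p ib istar j) (costI ib G) c.
Proof.
have inAP M : reflect (inA p istar j M)
    ([forall b, (\sum_i M i b == 1)%N] && (dM p istar j M <= 0)).
  by apply: (iffP andP) => -[/inMP HM dM_le0].
have [c minA] := is_min_over_exists (costI ib G) inAP
  (ex_intro _ _ (inA_const_row hp1 hj)).
exists c; split=> //; apply: is_min_over_dominated minA => [M | M inAt_M].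
  exact: inA_inAt.
by exists (repair p ib istar j M); [exact: inAt_repair | exact: costI_repair].
Qed.
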